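(* Let $A$ be a T-brace. Then the additive group of $\zeta_n(\star,A)/\zeta(\star,A)$ is periodic for all natural numbers $n$.
   Context: A (left) brace is a set $A$ with two operations $+$ and $\cdot$ such that $(A,+)$ is an abelian group, $(A,\cdot)$ is a group, and $a(b+c)=ab+ac-a$ for all $a,b,c\in A$. Put $a\star b=ab-a-b$. A subbrace is a subset which is a subgroup of both $(A,+)$ and $(A,\cdot)$; a subbrace $L$ is an ideal if $a\star z, z\star a\in L$ for all $a\in A$, $z\in L$, and then the quotient brace $A/L$ is defined. $A$ is a T-brace if whenever $I$ is an ideal of $J$ and $J$ is an ideal of $A$, then $I$ is an ideal of $A$. The $\star$-center is $\zeta(\star,A)=\{a: a\star x=x\star a=0\ \forall x\}$; the upper $\star$-central series is $\zeta_0(\star,A)=0$, $\zeta_{n+1}(\star,A)/\zeta_n(\star,A)=\zeta(\star,A/\zeta_n(\star,A))$, each term an ideal of $A$. *)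

From HB Require Import structures.
From mathcomp Require Import all_boot all_algebra.
Set Implicit Arguments. Unset Strict Implicit. Unset Printing Implicit Defensive.
Import GRing.Theory.
Local Open Scope ring_scope.

Section Brace.
Variables (A : zmodType) (mul : A -> A -> A) (one : A) (inv : A -> A).

Definition is_brace : Prop :=
  [/\ (forall a b c, mul a (mul b c) = mul (mul a b) c),
      (forall a, mul one a = a /\ mul a one = a),
      (forall a, mul (inv a) a = one /\ mul a (inv a) = one)
    & (forall a b c, mul a (b + c) = mul a b + mul a c - a)].

Definition star (a b : A) : A := mul a b - a - b.

Definition is_subbrace (L : A -> Prop) : Prop :=
  [/\ L 0, (forall x y, L x -> L y -> L (x - y)),
      L one, (forall x y, L x -> L y -> L (mul x y))
    & (forall x, L x -> L (inv x))].

Definition is_ideal_of (J L : A -> Prop) : Prop :=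
  [/\ (forall z, L z -> J z), is_subbrace L
    & (forall a z, J a -> L z -> L (star a z) /\ L (star z a))].

Definition is_ideal (L : A -> Prop) : Prop := is_ideal_of (fun _ => True) L.

Definition is_Tbrace : Prop :=
  forall I J : A -> Prop, is_ideal J -> is_ideal_of J I -> is_ideal I.

(* Preimage in A of the star-center of A/L: a + L is star-central in A/L
   iff a*x and x*a lie in L for all x (since (a+L)*(x+L) = a*x + L). *)
Definition star_center_mod (L : A -> Prop) : A -> Prop :=
  fun a => forall x, L (star a x) /\ L (star x a).

Fixpoint zeta (n : nat) : A -> Prop :=
  match n with
  | O => fun a => a = 0
  | S m => star_center_mod (zeta m)
  end.
End Brace.

From HB Require Import structures.
From mathcomp Require Import all_boot all_algebra.
From Stdlib Require Import Classical.
Set Implicit Arguments. Unset Strict Implicit. Unset Printing Implicit Defensive.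
Import GRing.Theory.
Local Open Scope ring_scope.

(* Fix an ideal L and let Z1 ⊆ Z2 be the preimages of ζ(⋆, A/L) and
   ζ_2(⋆, A/L).  Modulo L the map y ↦ y ⋆ x is additive on Z2 and depends on
   y only modulo Z1.  Hence, for b ∈ Z2 and c = b ⋆ b, the subgroup Z1 + ⟨b⟩
   is an ideal of A and L + ⟨c⟩ + ⟨b⟩ is an ideal of it; in a T-brace the
   latter is then an ideal of A, so it contains x ⋆ b and b ⋆ x.  When no
   positive multiple of b lies in Z1, these elements of Z1 lie in L + ⟨c⟩.
   Now let a ∈ Z2 and c = a ⋆ a.  If r c ∈ L for some r > 0, then b = r a
   has b ⋆ b ∈ L, so x ⋆ b, b ⋆ x ∈ L and b ∈ Z1 (unless a multiple of b
   already is).  Otherwise c has infinite order modulo L, and the above for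
   b = k a puts k (x ⋆ a) into L + ⟨k² c⟩ for all k > 0, which forces
   x ⋆ a ∈ L; likewise a ⋆ x ∈ L.  So Z2/Z1 is periodic, and taking L = ζ_n
   descends from ζ_{n+2} to ζ_{n+1}, hence to ζ. *)

Definition is_addsubgroup (A : zmodType) (P : A -> Prop) : Prop :=
  P 0 /\ (forall x y, P x -> P y -> P (x - y)).

Definition eqmod (A : zmodType) (P : A -> Prop) (x y : A) : Prop := P (x - y).

Notation "x = y %[in P ]" := (eqmod P x y)
  (at level 70, y at next level, format "x  =  y  %[in  P ]").

Definition plus_cyclic (A : zmodType) (P : A -> Prop) (b : A) : A -> Prop :=
  fun y => exists k : int, P (y - b *~ k).

Definition torsion_free_mod (A : zmodType) (P : A -> Prop) (x : A) : Prop :=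
  forall k : int, P (x *~ k) -> k = 0.

Definition periodic_mod (A : zmodType) (P : A -> Prop) (x : A) : Prop :=
  exists k : nat, (0 < k)%N /\ P (x *+ k).

Lemma absz_lt_dvd_eq0 (n q : int) (k : nat) :
  (`|n| < k)%N -> n = q * k%:Z -> n = 0.
Proof.
move=> + En; rewrite En; have [->|q_neq0] := eqVneq q 0; first by rewrite mul0r.
by rewrite abszM /= ltnNge leq_pmull ?absz_gt0.
Qed.

Section AdditiveSubgroups.
Variables (A : zmodType) (P : A -> Prop).
Hypothesis hP : is_addsubgroup P.

Lemma subgroup0 : P 0. Proof. by case: hP. Qed.

Lemma subgroupB x y : P x -> P y -> P (x - y). Proof. by case: hP => _; apply. Qed.

Lemma subgroupN x : P x -> P (- x).
Proof. by move=> Px; rewrite -sub0r; apply: subgroupB => //; apply: subgroup0. Qed.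

Lemma subgroupD x y : P x -> P y -> P (x + y).
Proof.
by move=> Px Py; rewrite -[y]opprK; apply: subgroupB => //; apply: subgroupN.
Qed.

Lemma subgroupMn x n : P x -> P (x *+ n).
Proof.
move=> Px; elim: n => [|n IHn]; first by rewrite mulr0n; apply: subgroup0.
by rewrite mulrS; apply: subgroupD.
Qed.

Lemma subgroupMz x k : P x -> P (x *~ k).
Proof. by move=> Px; case: k => n /=; [|apply: subgroupN]; apply: subgroupMn. Qed.

Lemma eqmod_refl x y : x = y -> x = y %[in P].
Proof. by move=> ->; rewrite /eqmod subrr; apply: subgroup0. Qed.

Lemma eqmod_sym x y : x = y %[in P] -> y = x %[in P].
Proof. by move/subgroupN; rewrite opprB. Qed.

Lemma eqmod_trans y x z : x = y %[in P] -> y = z %[in P] -> x = z %[in P].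
Proof. by move=> Pxy Pyz; have := subgroupD Pxy Pyz; rewrite addrA subrK. Qed.

Lemma eqmodD x x' y y' :
  x = x' %[in P] -> y = y' %[in P] -> x + y = x' + y' %[in P].
Proof. by move=> Px Py; have := subgroupD Px Py; rewrite /eqmod opprD addrACA. Qed.

Lemma eqmodN x x' : x = x' %[in P] -> - x = - x' %[in P].
Proof. by rewrite /eqmod -opprD; apply: subgroupN. Qed.

Lemma eqmodMz x x' k : x = x' %[in P] -> x *~ k = x' *~ k %[in P].
Proof. by move/(subgroupMz k); rewrite /eqmod mulrzBl. Qed.

Lemma eqmodMn x x' n : x = x' %[in P] -> x *+ n = x' *+ n %[in P].
Proof. by move/(subgroupMn n); rewrite /eqmod mulrnBl. Qed.

Lemma eqmod_mem x y : x = y %[in P] -> P y -> P x.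
Proof. by move=> Pxy Py; rewrite -(subrK y x); apply: subgroupD. Qed.

Lemma mem_of_square_multiples c t :
  torsion_free_mod P c ->
  (forall k, (0 < k)%N -> plus_cyclic P (c *+ (k * k)) (t *+ k)) -> P t.
Proof.
move=> tf_c span_t; have [n Pn] := span_t 1%N isT; rewrite !mulr1n in Pn.
(* With k = |n| + 1, k n c = k t = k^2 q c modulo P forces n = k q, so n = 0. *)
pose k := `|n|.+1; have [q Pq] := span_t k isT.
have := eqmod_trans (eqmod_sym (eqmodMn k Pn)) Pq.
rewrite /eqmod !pmulrn -!mulrzA -mulrzBr => /tf_c /eqP.
rewrite subr_eq0 => /eqP nkq.
have n_eq : n = q * k%:Z.
  by apply: (mulIf (x := k%:Z)) => //; rewrite nkq PoszM mulrC mulrA.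
by rewrite (absz_lt_dvd_eq0 (ltnSn _) n_eq) mulr0z subr0 in Pn.
Qed.

Lemma periodic_or_torsion_free x : periodic_mod P x \/ torsion_free_mod P x.
Proof.
have [|aperiodic] := classic (periodic_mod P x); first by left.
right=> -[[|n]|n] // Pxn; case: aperiodic; exists n.+1; split=> //.
by move: Pxn; rewrite NegzE mulrNz => /subgroupN; rewrite opprK.
Qed.

Lemma torsion_free_modMn x n :
  (0 < n)%N -> torsion_free_mod P x -> torsion_free_mod P (x *+ n).
Proof.
move=> n_gt0 tf_x k; rewrite pmulrn -mulrzA => /tf_x /eqP.
rewrite mulf_eq0 => /orP[/eqP[n0] | /eqP //].
by rewrite n0 in n_gt0.
Qed.

Lemma plus_cyclic_subgroup b : is_addsubgroup (plus_cyclic P b).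
Proof.
split; first by exists 0; rewrite mulr0z subr0; apply: subgroup0.
move=> x y [k Pk] [m Pm]; exists (k - m).
have -> : x - y - b *~ (k - m) = (x - b *~ k) - (y - b *~ m).
  by rewrite mulrzBr (opprB (b *~ k)) (opprB y) addrACA [RHS]addrACA (addrC (- y)).
exact: subgroupB.
Qed.

Lemma mem_plus_cyclic b y : P y -> plus_cyclic P b y.
Proof. by exists 0; rewrite mulr0z subr0. Qed.

Lemma plus_cyclic_gen b : plus_cyclic P b b.
Proof. by exists 1; rewrite mulr1z subrr; apply: subgroup0. Qed.

Lemma plus_cyclic_eqmod b b' y y' :
  b = b' %[in P] -> y = y' %[in P] -> plus_cyclic P b y -> plus_cyclic P b' y'.
Proof.
move=> Pbb' Pyy' [k Pk]; exists k.
exact: eqmod_trans (eqmod_sym Pyy') (eqmod_trans Pk (eqmodMz k Pbb')).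
Qed.

End AdditiveSubgroups.

Section PlusCyclic.
Variables (A : zmodType) (P Q : A -> Prop).
Hypothesis sPQ : forall y, P y -> Q y.

Lemma plus_cyclic_mono b y : plus_cyclic P b y -> plus_cyclic Q b y.
Proof. by case=> k /sPQ Qk; exists k. Qed.

Hypothesis hQ : is_addsubgroup Q.

Lemma plus_cyclic_sub b y : Q b -> plus_cyclic P b y -> Q y.
Proof. by move=> Qb [k /sPQ /(eqmod_mem hQ)]; apply; apply: subgroupMz. Qed.

Lemma plus_cyclic_torsion_free b t :
  torsion_free_mod Q b -> Q t -> plus_cyclic P b t -> P t.
Proof.
move=> tf_b Qt [k Pk]; have Qbk : Q (b *~ k).
  by have := subgroupB hQ Qt (sPQ Pk); rewrite subKr.
by rewrite (tf_b _ Qbk) mulr0z subr0 in Pk.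
Qed.

End PlusCyclic.

Lemma periodic_modMn (A : zmodType) (P : A -> Prop) x n :
  (0 < n)%N -> periodic_mod P (x *+ n) -> periodic_mod P x.
Proof.
move=> n_gt0 [k [k_gt0 Pxnk]]; exists (n * k)%N; split; last by rewrite mulrnA.
by rewrite muln_gt0 n_gt0.
Qed.

Lemma periodic_mod_trans (A : zmodType) (P Q : A -> Prop) x :
  periodic_mod P x -> (forall y, P y -> periodic_mod Q y) -> periodic_mod Q x.
Proof. by move=> [k [k_gt0 Pxk]] /(_ _ Pxk); apply: periodic_modMn. Qed.

Section Brace.
Variables (A : zmodType) (mul : A -> A -> A) (one : A) (inv : A -> A).
Hypothesis hb : is_brace mul one inv.
Local Notation star := (star mul).
Local Notation Z := (star_center_mod mul).

Lemma mulA a b c : mul a (mul b c) = mul (mul a b) c. Proof. by case: hb. Qed.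

Lemma mul1b a : mul one a = a. Proof. by case: hb => _ /(_ a) []. Qed.

Lemma mulbV a : mul a (inv a) = one. Proof. by case: hb => _ _ /(_ a) []. Qed.

Lemma mulVb a : mul (inv a) a = one. Proof. by case: hb => _ _ /(_ a) []. Qed.

Lemma mulbD a b c : mul a (b + c) = mul a b + mul a c - a. Proof. by case: hb. Qed.

Lemma mulb0 a : mul a 0 = a.
Proof.
have := mulbD a 0 0; rewrite addr0 -addrA -{1}[mul a 0]addr0 => /addrI /esym /eqP.
by rewrite subr_eq0 => /eqP.
Qed.

Lemma one_eq0 : one = 0. Proof. by rewrite -{1}(mulb0 one) mul1b. Qed.

Lemma mul0b a : mul 0 a = a. Proof. by rewrite -one_eq0 mul1b. Qed.

Lemma mul_star a b : mul a b = star a b + a + b.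
Proof. by rewrite /star addrAC !subrK. Qed.

Lemma add_mul_star a b : a + b = mul a b - star a b.
Proof. by rewrite mul_star -(addrA (star a b)) (addrC (star a b)) addrK. Qed.

Lemma star0l a : star 0 a = 0. Proof. by rewrite /star mul0b subr0 subrr. Qed.

Lemma starD a y z : star a (y + z) = star a y + star a z.
Proof.
rewrite /star mulbD opprD (addrACA (mul a y - a)) (addrACA (mul a y)).
by rewrite -(addrA (mul a y + mul a z)).
Qed.

Lemma star_is_zmod_morphism a : zmod_morphism (star a).
Proof. by move=> y z; apply: (addIr (star a z)); rewrite subrK -starD subrK. Qed.

HB.instance Definition _ a :=
  GRing.isZmodMorphism.Build A A (star a) (star_is_zmod_morphism a).

Lemma star_mull a b x :
  star (mul a b) x = star a (star b x) + star a x + star b x.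
Proof.
apply: (addIr (mul a b + x)); rewrite addrA -mul_star -mulA.
rewrite (mul_star a (mul b x)) (mul_star b x) (mul_star a b) 2![in LHS]raddfD /=.
move: (star a (star b x)) (star a b) (star a x) (star b x) => p q r s.
by rewrite !addrA [LHS](ACl (1*3*5*2*4*6*7)).
Qed.

Lemma inv_star y : inv y = - y - star y (inv y).
Proof.
have := mulbV y; rewrite one_eq0 mul_star => /eqP.
by rewrite addrC addr_eq0 opprD addrC => /eqP.
Qed.

Lemma ideal_addsubgroup J P : is_ideal_of mul one inv J P -> is_addsubgroup P.
Proof. by case=> _ []. Qed.

Lemma subbrace_of_star_closed P :
    is_addsubgroup P ->
    (forall y z, P y -> P z -> P (star y z)) ->
    (forall y, P y -> P (star y (inv y))) ->
  is_subbrace mul one inv P.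
Proof.
move=> hP starP invP; split.
- exact: subgroup0 hP.
- exact: subgroupB hP.
- by rewrite one_eq0; apply: subgroup0.
- move=> y z Py Pz; rewrite mul_star.
  exact: (subgroupD hP (subgroupD hP (starP _ _ Py Pz) Py) Pz).
- move=> y Py; rewrite inv_star.
  exact: (subgroupB hP (subgroupN hP Py) (invP _ Py)).
Qed.

Lemma ideal_of_star_absorbing P :
    is_addsubgroup P -> (forall a z, P z -> P (star a z) /\ P (star z a)) ->
  is_ideal mul one inv P.
Proof.
move=> hP starP; split=> // [|a z _]; last exact: starP.
apply: subbrace_of_star_closed => // [y z _ Pz | y Py].
  exact: (starP y z Pz).1.
exact: (starP (inv y) y Py).2.
Qed.

Section Ideal.
Variable L : A -> Prop.
Hypothesis hL : is_ideal mul one inv L.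
Let hL' := ideal_addsubgroup hL.

Lemma ideal_starr a z : L z -> L (star a z).
Proof. by case: hL => _ _ /(_ a z I) starL /starL []. Qed.

Lemma ideal_starl a z : L z -> L (star z a).
Proof. by case: hL => _ _ /(_ a z I) starL /starL []. Qed.

Lemma ideal_sub_center z : L z -> Z L z.
Proof. by move=> Lz x; split; [apply: ideal_starl | apply: ideal_starr]. Qed.

Lemma star_eqmodl_ideal y y' x : L (y - y') -> star y x = star y' x %[in L].
Proof.
move=> Lyy'; rewrite -(subrK y' y) (addrC (y - y')); move: (y - y') Lyy' => l Ll.
pose l' := mul (inv y') (y' + l).
have El' : l' = star (inv y') l + l.
  by rewrite /l' mulbD mulVb one_eq0 add0r mul_star addrAC addrK.
have -> : y' + l = mul y' l' by rewrite /l' mulA mulbV one_eq0 mul0b.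
have Ll' : L l' by rewrite El'; exact: (subgroupD hL' (ideal_starr _ Ll) Ll).
rewrite /eqmod star_mull addrAC addrK.
exact: (subgroupD hL' (ideal_starr _ (ideal_starl _ Ll')) (ideal_starl _ Ll')).
Qed.

Lemma star_eqmodl_center y y' x : Z L (y - y') -> star y x = star y' x %[in L].
Proof.
move=> Zyy'; rewrite -(subrK y' y) (addrC (y - y')); move: (y - y') Zyy' => z Zz.
rewrite add_mul_star; apply: (eqmod_trans hL' (y := star (mul y' z) x)).
  apply: star_eqmodl_ideal.
  by rewrite addrAC subrr add0r; apply: (subgroupN hL' (Zz y').2).
rewrite /eqmod star_mull addrAC addrK; have Lzx := (Zz x).1.
exact: (subgroupD hL' (ideal_starr _ Lzx) Lzx).
Qed.

Lemma center_ideal : is_ideal mul one inv (Z L).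
Proof.
apply: ideal_of_star_absorbing => [|a z Zz]; last first.
  by split; apply: ideal_sub_center; [apply: (Zz a).2 | apply: (Zz a).1].
split=> [x | u v Zu Zv x].
  by rewrite star0l raddf0; split; apply: (subgroup0 hL').
split; last by rewrite raddfB; apply: (subgroupB hL' (Zu x).2 (Zv x).2).
have Zv' : Z L (u - (u - v)) by rewrite subKr.
exact: (eqmod_mem hL' (eqmod_sym hL' (star_eqmodl_center x Zv')) (Zu x).1).
Qed.

End Ideal.

Section SecondCenter.
Variable L : A -> Prop.
Hypothesis hL : is_ideal mul one inv L.
Local Notation Z1 := (Z L).
Local Notation Z2 := (Z (Z L)).
Let hL' := ideal_addsubgroup hL.
Let hZ1 := center_ideal hL.
Let hZ1' := ideal_addsubgroup hZ1.
Let hZ2' := ideal_addsubgroup (center_ideal hZ1).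

Lemma star_addl_center2 u y x :
  Z2 y -> star (u + y) x = star u x + star y x %[in L].
Proof.
move=> Z2y; rewrite add_mul_star.
apply: (eqmod_trans hL' (y := star (mul u y) x)).
  apply: (star_eqmodl_center hL); rewrite addrAC subrr add0r.
  exact: (subgroupN hZ1' (Z2y u).2).
rewrite /eqmod star_mull -(addrA (star u (star y x))) addrK.
exact: ((Z2y x).1 u).2.
Qed.

Lemma star_mulrnl_center2 b n x : Z2 b -> star (b *+ n) x = star b x *+ n %[in L].
Proof.
move=> Z2b; elim: n => [|n IHn]; first by rewrite !mulr0n star0l; apply: eqmod_refl.
rewrite !mulrSr; apply: (eqmod_trans hL' (star_addl_center2 _ _ Z2b)).
exact: (eqmodD hL' IHn (eqmod_refl hL' _)).
Qed.

Lemma star_oppl_center2 y x : Z2 y -> star (- y) x = - star y x %[in L].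
Proof.
move=> Z2y; have := eqmod_sym hL' (star_addl_center2 (- y) x Z2y).
by rewrite addNr star0l /eqmod subr0 opprK.
Qed.

Lemma star_mulrzl_center2 b k x : Z2 b -> star (b *~ k) x = star b x *~ k %[in L].
Proof.
move=> Z2b; case: k => n; first exact: star_mulrnl_center2.
rewrite NegzE !mulrNz -!pmulrn.
apply: (eqmod_trans hL' (star_oppl_center2 _ (subgroupMn hZ2' _ Z2b))).
exact: (eqmodN hL' (star_mulrnl_center2 _ _ Z2b)).
Qed.

Lemma star_sq_mulrn_center2 a k :
  Z2 a -> star (a *+ k) (a *+ k) = star a a *+ (k * k) %[in L].
Proof.
move=> Z2a; rewrite raddfMn /= mulrnA.
exact: (eqmodMn hL' k (star_mulrnl_center2 _ _ Z2a)).
Qed.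

Section Span.
Variable b : A.
Hypothesis Z2b : Z2 b.
Local Notation c := (star b b).
Local Notation Jb := (plus_cyclic Z1 b).
Local Notation Ib := (plus_cyclic (plus_cyclic L c) b).
Let hLc : is_addsubgroup (plus_cyclic L c) := plus_cyclic_subgroup hL' c.

Lemma plus_cyclic_sq_sub_center y : plus_cyclic L c y -> Z1 y.
Proof. exact: (plus_cyclic_sub (ideal_sub_center hL) hZ1' (Z2b b).1). Qed.

Lemma plus_cyclic_sub_center2 y : Jb y -> Z2 y.
Proof. exact: (plus_cyclic_sub (ideal_sub_center hZ1) hZ2' Z2b). Qed.

Lemma star_plus_cyclic y w k m :
  Z1 (y - b *~ k) -> Z1 (w - b *~ m) -> star y w = c *~ (m * k) %[in L].
Proof.
move=> Zy Zw; apply: (eqmod_trans hL' (star_eqmodl_center hL w Zy)).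
apply: (eqmod_trans hL' (star_mulrzl_center2 _ _ Z2b)).
rewrite mulrzA; apply: (eqmodMz hL'); rewrite /eqmod -raddfMz -raddfB /=.
exact: (Zw b).2.
Qed.

Lemma plus_cyclic_center2_ideal : is_ideal mul one inv Jb.
Proof.
apply: ideal_of_star_absorbing; first exact: (plus_cyclic_subgroup hZ1').
move=> a z /plus_cyclic_sub_center2 /(_ a) [Zza Zaz].
by split; apply: mem_plus_cyclic.
Qed.

Lemma plus_cyclic_sq_ideal_of : is_ideal_of mul one inv Jb Ib.
Proof.
have Ib_of_eqmod y j : y = c *~ j %[in L] -> Ib y.
  by move=> Lyj; apply: mem_plus_cyclic; exists j.
have Z1_of_Ib y : Ib y -> exists k, Z1 (y - b *~ k).
  by case=> k /plus_cyclic_sq_sub_center; exists k.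
split.
- by move=> z; apply: plus_cyclic_mono; apply: plus_cyclic_sq_sub_center.
- apply: subbrace_of_star_closed => [|y z /Z1_of_Ib[k Zy] /Z1_of_Ib[m Zz] | y Iy].
  + exact: (plus_cyclic_subgroup hLc).
  + exact: (Ib_of_eqmod _ _ (star_plus_cyclic Zy Zz)).
  + have [k Zy] := Z1_of_Ib _ Iy.
    have Jy := plus_cyclic_mono plus_cyclic_sq_sub_center Iy.
    have Zs : Z1 (star y (inv y)) := (plus_cyclic_sub_center2 Jy (inv y)).1.
    have Zinv : Z1 (inv y - b *~ (- k)).
      rewrite inv_star; set s := star y (inv y).
      have -> : - y - s - b *~ - k = - (y - b *~ k) - s.
        by rewrite mulrNz opprK (opprB y) addrAC (addrC (- y)).
      exact: (subgroupB hZ1' (subgroupN hZ1' Zy) Zs).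
    exact: (Ib_of_eqmod _ _ (star_plus_cyclic Zy Zinv)).
- move=> a z [k Za] /Z1_of_Ib[m Zz].
  by split; apply: Ib_of_eqmod; apply: star_plus_cyclic; eassumption.
Qed.

Lemma star_center2_plus_cyclic_sq (hT : is_Tbrace mul one inv) x :
  Ib (star x b) /\ Ib (star b x).
Proof.
have [_ _ starIb] := hT _ _ plus_cyclic_center2_ideal plus_cyclic_sq_ideal_of.
exact: (starIb x b I (plus_cyclic_gen hLc b)).
Qed.

End Span.

Section Periodic.
Hypothesis hT : is_Tbrace mul one inv.

Lemma star_center2_torsion_free b x :
    Z2 b -> torsion_free_mod Z1 b ->
  plus_cyclic L (star b b) (star x b) /\ plus_cyclic L (star b b) (star b x).
Proof.
move=> Z2b tf_b; have [Ixb Ibx] := star_center2_plus_cyclic_sq Z2b hT x.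
have [Zbx Zxb] := Z2b x.
have sLcZ1 := plus_cyclic_sq_sub_center Z2b.
by split; apply: (plus_cyclic_torsion_free sLcZ1 hZ1' tf_b).
Qed.

Lemma center2_periodic_of_sq b : Z2 b -> L (star b b) -> periodic_mod Z1 b.
Proof.
move=> Z2b Lc; have [//|tf_b] := periodic_or_torsion_free hZ1' b.
exists 1%N; split=> //; rewrite mulr1n => x.
have [Lxb Lbx] := star_center2_torsion_free x Z2b tf_b.
by split; apply: (plus_cyclic_sub (fun y Ly => Ly) hL' Lc).
Qed.

Lemma center2_periodic_of_torsion_free_sq a :
  Z2 a -> torsion_free_mod L (star a a) -> periodic_mod Z1 a.
Proof.
move=> Z2a tf_c; have [//|tf_a] := periodic_or_torsion_free hZ1' a.
exists 1%N; split=> //; rewrite mulr1n => x.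
have span_k k : (0 < k)%N ->
    plus_cyclic L (star a a *+ (k * k)) (star (a *+ k) x) /\
    plus_cyclic L (star a a *+ (k * k)) (star x (a *+ k)).
  move=> k_gt0; have Z2ak := subgroupMn hZ2' k Z2a.
  have tf_ak := torsion_free_modMn k_gt0 tf_a.
  have [Lxak Lakx] := star_center2_torsion_free x Z2ak tf_ak.
  have sq_ak := star_sq_mulrn_center2 k Z2a.
  by split; apply: (plus_cyclic_eqmod hL' sq_ak (eqmod_refl hL' erefl)).
split; apply: (mem_of_square_multiples hL' tf_c) => k /span_k [Lakx Lxak].
  have ak_x := star_mulrnl_center2 k x Z2a.
  exact: (plus_cyclic_eqmod hL' (eqmod_refl hL' erefl) ak_x Lakx).
by move: Lxak; rewrite raddfMn.
Qed.

Lemma center2_periodic a : Z2 a -> periodic_mod Z1 a.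
Proof.
move=> Z2a.
have [[r [r_gt0 Lcr]]|] := periodic_or_torsion_free hL' (star a a); last first.
  exact: center2_periodic_of_torsion_free_sq.
apply: (periodic_modMn r_gt0); apply: center2_periodic_of_sq.
  exact: (subgroupMn hZ2').
apply: (eqmod_mem hL' (star_sq_mulrn_center2 r Z2a)).
by rewrite mulrnA; apply: (subgroupMn hL').
Qed.

End Periodic.
End SecondCenter.

Lemma zeta_ideal n : is_ideal mul one inv (zeta mul n).
Proof.
elim: n => [|n IHn]; last exact: (center_ideal IHn).
apply: ideal_of_star_absorbing => [|a z /= ->]; last by rewrite star0l raddf0.
by split=> // x y /= -> ->; rewrite subr0.
Qed.

End Brace.

Theorem proposition4p2 (A : zmodType) (mul : A -> A -> A) (one : A)
    (inv : A -> A) :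
  is_brace mul one inv -> is_Tbrace mul one inv ->
  forall (n : nat) (a : A), zeta mul n a ->
    exists k : nat, (0 < k)%N /\ zeta mul 1 (a *+ k).
Proof.
move=> hb hT n a; change (zeta mul n a -> periodic_mod (zeta mul 1) a).
case: n => [/= -> | n].
  exists 1%N; rewrite mul0rn; split=> //.
  exact: (subgroup0 (ideal_addsubgroup (zeta_ideal hb 1))).
elim: n a => [|n IHn] a Ha; first by exists 1%N; rewrite mulr1n.
exact: (periodic_mod_trans (center2_periodic hb (zeta_ideal hb n) hT Ha) IHn).
Qed.
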